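(* Suppose $m$ satisfies (H1) and one of (H2a), (H2b), (H2c). Then: (i) if (H2a) holds and (Osg) holds, then $\beta\le1$, $\beta_1=0$ and $\beta_2=-1$; (ii) if (H2b) holds, then (Osg) fails; (iii) if (H2c) holds, then (Osg) holds.
   Context: $m:(0,\infty)\to\mathbb{R}$. (H1) (for some $n\in\mathbb{N}^\star$): $m\in C^{n+4}(\mathbb{R}_+)$; $m>0$, $m'\ge0$ on $(0,\infty)$; $\lim_{r\to0^+}rm'(r)$ exists; $|\frac{\mathrm d^k}{\mathrm dr^k}m'(r)|\le Cr^{-k}m'(r)$ for $k=1,\dots,n+3$, $r>0$. (H2a): with $\widetilde m(r)=m(e^r)$, there exist $\beta\in[0,+\infty]$, $\beta_1\in[0,\infty)$, $\beta_2\in(-2,\infty)$ with $\lim_{r\to\infty}m(r)=\infty$, $\lim\frac{r(\log r)\widetilde m'(r)}{\widetilde m(r)}=\beta$, $\lim\frac{r\widetilde m'(r)}{\widetilde m(r)}=\beta_1$, $\lim\frac{r\widetilde m''(r)}{\widetilde m'(r)}=\beta_2$ (limits as $r\to\infty$). (H2b): there is $\alpha\in(0,2)$ with $\lim_{r\to\infty}\frac{rm'(r)}{m(r)}=\alpha$. (H2c): there is $C>0$ with $\lim_{r\to\infty}m(r)=C<\infty$. (Osg): $\int_2^\infty\frac{\mathrm dr}{r(\log r)m(r)}=+\infty$. *)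

From Stdlib Require Import Reals.
From Coquelicot Require Import Coquelicot.
Open Scope R_scope.

Definition CN_pos (f : R -> R) (N : nat) : Prop :=
  (forall (k : nat) (r : R), (k < N)%nat -> 0 < r -> ex_derive (Derive_n f k) r) /\
  (forall r : R, 0 < r -> continuous (Derive_n f N) r).

Definition H1 (n : nat) (m : R -> R) : Prop :=
  CN_pos m (n + 4) /\
  (forall r, 0 < r -> 0 < m r) /\
  (forall r, 0 < r -> 0 <= Derive m r) /\
  (exists l : R, filterlim (fun r => r * Derive m r) (at_right 0) (locally l)) /\
  (exists C : R, forall (k : nat) (r : R), (1 <= k <= n + 3)%nat -> 0 < r ->
      Rabs (Derive_n (Derive m) k r) <= C * / r ^ k * Derive m r).

Definition mtilde (m : R -> R) : R -> R := fun r => m (exp r).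

Definition H2a (m : R -> R) (beta : Rbar) (beta1 beta2 : R) : Prop :=
  Rbar_le (Finite 0) beta /\ 0 <= beta1 /\ -2 < beta2 /\
  is_lim m p_infty p_infty /\
  is_lim (fun r => r * ln r * Derive (mtilde m) r / mtilde m r) p_infty beta /\
  is_lim (fun r => r * Derive (mtilde m) r / mtilde m r) p_infty (Finite beta1) /\
  is_lim (fun r => r * Derive_n (mtilde m) 2 r / Derive (mtilde m) r) p_infty
    (Finite beta2).

Definition H2b (m : R -> R) (alpha : R) : Prop :=
  0 < alpha < 2 /\
  is_lim (fun r => r * Derive m r / m r) p_infty (Finite alpha).

Definition H2c (m : R -> R) (C : R) : Prop :=
  0 < C /\ is_lim m p_infty (Finite C).

(* (Osg): int_2^oo dr / (r log r m(r)) = +oo, i.e. the partial integrals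
   int_2^T tend to +oo as T -> +oo (the integrand is positive). *)
Definition Osg (m : R -> R) : Prop :=
  is_lim (fun T => RInt (fun r => 1 / (r * ln r * m r)) 2 T) p_infty p_infty.

(* Everything rests on comparing logarithmic derivatives: if h'/h >= a psi' near
   infinity then h >= c exp(a psi).  Under (H2b), beta1 > 0 and beta > 1 this gives
   m(r) >= c r^a, m(r) >= c (log r)^a and m(r) >= c (log log r)^b with b > 1, so the
   integrand 1/(r log r m(r)) is dominated by the derivative of a bounded function and
   (Osg) fails; under (H2c), m <= 2C near infinity and log log r / (2C) is a divergent
   primitive of a minorant of the integrand.
   For beta2, let g = m~'.  By (H1) and a Gronwall argument m' is eventually positive,
   hence so is g.  If beta2 < -1 then g(s) <= K s^(-1-d) is integrable and m~ stays
   bounded, contradicting m -> +oo.  If beta2 > -1 then phi = s g / m~ has elasticity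
   s phi'/phi -> 1 + beta2 - beta1 = 1 + beta2 > 0, so phi grows like a power of s,
   contradicting phi -> beta1 = 0. *)

From Stdlib Require Import Reals Lra Lia Classical.
From Coquelicot Require Import Coquelicot.
Open Scope R_scope.

Lemma exp_le_compat x y : x <= y -> exp x <= exp y.
Proof. intros [Hlt | ->]; [left; apply exp_increasing | right]; auto. Qed.

Lemma ln_pos x : 1 < x -> 0 < ln x.
Proof. intros Hx. rewrite <- ln_1. apply ln_increasing; lra. Qed.

Lemma ln_lt_self x : 0 < x -> ln x < x.
Proof. intros Hx. generalize (exp_ineq1_le (ln x)). rewrite exp_ln by exact Hx. lra. Qed.

Lemma Rmult_inv_le_of_lt a k d h : 0 < k -> a < k * d / h -> a * / k <= d / h.
Proof.
  intros Hk Ha. apply (Rmult_le_reg_l k); [exact Hk |].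
  replace (k * (a * / k)) with a by (field; lra).
  unfold Rdiv in *. lra.
Qed.

Lemma Rle_mult_inv_of_lt a k d h : 0 < k -> k * d / h < a -> d / h <= a * / k.
Proof.
  intros Hk Ha. apply (Rmult_le_reg_l k); [exact Hk |].
  replace (k * (a * / k)) with a by (field; lra).
  unfold Rdiv in *. lra.
Qed.

Lemma eventually_gt a : Rbar_locally p_infty (fun x => a < x).
Proof. exists a; auto. Qed.

Lemma eventually_gt_of_is_lim (f : R -> R) (l : Rbar) (a : R) :
  is_lim f p_infty l -> Rbar_lt a l -> Rbar_locally p_infty (fun x => a < f x).
Proof. intros Hf Ha. exact (Hf _ (open_Rbar_gt' l a Ha)). Qed.

Lemma eventually_lt_of_is_lim (f : R -> R) (l : Rbar) (a : R) :
  is_lim f p_infty l -> Rbar_lt l a -> Rbar_locally p_infty (fun x => f x < a).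
Proof. intros Hf Ha. exact (Hf _ (open_Rbar_lt' l a Ha)). Qed.

Lemma is_lim_scal_pos_p_infty (f : R -> R) k :
  0 < k -> is_lim f p_infty p_infty -> is_lim (fun x => k * f x) p_infty p_infty.
Proof.
  intros Hk Hf.
  replace (p_infty : Rbar) with (Rbar_mult k p_infty) at 2.
  - exact (is_lim_scal_l f k p_infty p_infty Hf).
  - rewrite Rbar_mult_comm. exact (is_Rbar_mult_unique _ _ _ (is_Rbar_mult_p_infty_pos k Hk)).
Qed.

Lemma is_lim_power_p_infty c d :
  0 < c -> 0 < d -> is_lim (fun s => c * exp (d * ln s)) p_infty p_infty.
Proof.
  intros Hc Hd. apply is_lim_scal_pos_p_infty; [exact Hc |].
  apply (is_lim_comp exp (fun s => d * ln s) p_infty p_infty p_infty is_lim_exp_p).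
  - exact (is_lim_scal_pos_p_infty ln d Hd is_lim_ln_p).
  - exists 0; intros; discriminate.
Qed.

Lemma nondecreasing_of_derive_nonneg (f df : R -> R) S :
  (forall x, S < x -> is_derive f x (df x)) -> (forall x, S < x -> 0 <= df x) ->
  forall x y, S < x -> x <= y -> f x <= f y.
Proof.
  intros Hf Hdf x y Hx Hxy.
  destruct (Req_dec x y) as [<- | Hne]; [lra |].
  destruct (MVT_gen f x y df) as (c & Hc & Hinc).
  - intros z Hz; rewrite Rmin_left in Hz by lra; apply Hf; lra.
  - intros z Hz; rewrite Rmin_left in Hz by lra.
    apply (proj2 (continuity_pt_filterlim f z)).
    apply (ex_derive_continuous f z); exists (df z); apply Hf; lra.
  - rewrite Rmin_left, Rmax_right in Hc by lra.
    assert (0 <= df c) by (apply Hdf; lra). nra.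
Qed.

Lemma increment_le_of_derive_le (f df g dg : R -> R) S :
  (forall x, S < x -> is_derive f x (df x)) -> (forall x, S < x -> is_derive g x (dg x)) ->
  (forall x, S < x -> df x <= dg x) ->
  forall x y, S < x -> x <= y -> f y - f x <= g y - g x.
Proof.
  intros Hf Hg Hle x y Hx Hxy.
  enough (g x - f x <= g y - f y) by lra.
  apply (nondecreasing_of_derive_nonneg (fun z => g z - f z) (fun z => dg z - df z) S);
    auto.
  - intros z Hz; apply (is_derive_minus g f); auto.
  - intros z Hz; specialize (Hle z Hz); lra.
Qed.

Lemma not_is_lim_p_infty_of_derive_le (f df G dG : R -> R) B :
  Rbar_locally p_infty (fun x => is_derive f x (df x) /\ is_derive G x (dG x) /\
    df x <= dG x /\ G x <= B) ->
  ~ is_lim f p_infty p_infty.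
Proof.
  intros [S HS] Hf.
  set (x0 := S + 1).
  assert (Hbounded : Rbar_locally p_infty (fun y => f y <= f x0 + B - G x0)).
  { exists x0; intros y Hy.
    assert (f y - f x0 <= G y - G x0).
    { apply (increment_le_of_derive_le f df G dG S); try (unfold x0 in *; lra);
        intros x Hx; apply HS, Hx. }
    assert (G y <= B) by (apply HS; unfold x0 in Hy; lra).
    lra. }
  destruct (filter_ex _ (filter_and _ _ Hbounded
    (eventually_gt_of_is_lim f _ (f x0 + B - G x0) Hf I))) as (y & Hle & Hgt).
  lra.
Qed.

Lemma is_lim_p_infty_of_derive_ge (f df G dG : R -> R) :
  Rbar_locally p_infty (fun x =>
    is_derive f x (df x) /\ is_derive G x (dG x) /\ dG x <= df x) ->
  is_lim G p_infty p_infty -> is_lim f p_infty p_infty.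
Proof.
  intros [S HS] HG.
  set (x0 := S + 1).
  apply (is_lim_le_p_loc (fun y => G y + (f x0 - G x0))).
  - exists x0; intros y Hy.
    assert (G y - G x0 <= f y - f x0).
    { apply (increment_le_of_derive_le G dG f df S); try (unfold x0 in *; lra);
        intros x Hx; apply HS, Hx. }
    lra.
  - eapply is_lim_plus; [exact HG | apply is_lim_const | reflexivity].
Qed.

Lemma is_derive_ln_comp (h : R -> R) x dh :
  0 < h x -> is_derive h x dh -> is_derive (fun s => ln (h s)) x (dh / h x).
Proof.
  intros Hpos Hh.
  apply (is_derive_comp ln h x (/ h x) dh); [apply is_derive_ln, Hpos | exact Hh].
Qed.

Lemma lower_bound_of_log_derive_ge (h dh psi dpsi : R -> R) (a : R) :
  Rbar_locally p_infty (fun s => 0 < h s /\ is_derive h s (dh s) /\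
    is_derive psi s (dpsi s) /\ a * dpsi s <= dh s / h s) ->
  exists c, 0 < c /\ Rbar_locally p_infty (fun s => c * exp (a * psi s) <= h s).
Proof.
  intros [S HS].
  set (s0 := S + 1).
  exists (exp (ln (h s0) - a * psi s0)); split; [apply exp_pos |].
  exists s0; intros s Hs.
  assert (a * psi s - a * psi s0 <= ln (h s) - ln (h s0)).
  { apply (increment_le_of_derive_le (fun x => a * psi x) (fun x => a * dpsi x)
      (fun x => ln (h x)) (fun x => dh x / h x) S); try (unfold s0 in *; lra).
    - intros x Hx; apply is_derive_scal, HS, Hx.
    - intros x Hx; destruct (HS x Hx) as (Hpos & Hh & _); apply is_derive_ln_comp; auto.
    - intros x Hx; apply HS, Hx. }
  rewrite <- exp_plus, <- (exp_ln (h s)) by (apply HS; unfold s0 in *; lra).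
  apply exp_le_compat; lra.
Qed.

Lemma upper_bound_of_log_derive_le (h dh psi dpsi : R -> R) (a : R) :
  Rbar_locally p_infty (fun s => 0 < h s /\ is_derive h s (dh s) /\
    is_derive psi s (dpsi s) /\ dh s / h s <= a * dpsi s) ->
  exists K, 0 < K /\ Rbar_locally p_infty (fun s => h s <= K * exp (a * psi s)).
Proof.
  intros [S HS].
  set (s0 := S + 1).
  exists (exp (ln (h s0) - a * psi s0)); split; [apply exp_pos |].
  exists s0; intros s Hs.
  assert (ln (h s) - ln (h s0) <= a * psi s - a * psi s0).
  { apply (increment_le_of_derive_le (fun x => ln (h x)) (fun x => dh x / h x)
      (fun x => a * psi x) (fun x => a * dpsi x) S); try (unfold s0 in *; lra).
    - intros x Hx; destruct (HS x Hx) as (Hpos & Hh & _); apply is_derive_ln_comp; auto.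
    - intros x Hx; apply is_derive_scal, HS, Hx.
    - intros x Hx; apply HS, Hx. }
  rewrite <- exp_plus, <- (exp_ln (h s)) by (apply HS; unfold s0 in *; lra).
  apply exp_le_compat; lra.
Qed.

Definition elasticity (f df : R -> R) (s : R) : R := s * df s / f s.

Lemma power_lower_bound_of_elasticity (h dh : R -> R) (l a : R) :
  Rbar_locally p_infty (fun s => 0 < h s /\ is_derive h s (dh s)) ->
  is_lim (elasticity h dh) p_infty l -> a < l ->
  exists c, 0 < c /\ Rbar_locally p_infty (fun s => c * exp (a * ln s) <= h s).
Proof.
  intros Hh Hl Ha.
  apply (lower_bound_of_log_derive_ge h dh ln Rinv).
  generalize (filter_and _ _ (filter_and _ _ Hh (eventually_gt 0))
    (eventually_gt_of_is_lim _ _ a Hl Ha)).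
  apply filter_imp; intros s [[[Hpos Hder] Hs] Hel].
  split; [| split; [| split]]; auto.
  - apply is_derive_ln, Hs.
  - apply Rmult_inv_le_of_lt; auto.
Qed.

Lemma power_upper_bound_of_elasticity (h dh : R -> R) (l a : R) :
  Rbar_locally p_infty (fun s => 0 < h s /\ is_derive h s (dh s)) ->
  is_lim (elasticity h dh) p_infty l -> l < a ->
  exists K, 0 < K /\ Rbar_locally p_infty (fun s => h s <= K * exp (a * ln s)).
Proof.
  intros Hh Hl Ha.
  apply (upper_bound_of_log_derive_le h dh ln Rinv).
  generalize (filter_and _ _ (filter_and _ _ Hh (eventually_gt 0))
    (eventually_lt_of_is_lim _ _ a Hl Ha)).
  apply filter_imp; intros s [[[Hpos Hder] Hs] Hel].
  split; [| split; [| split]]; auto.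
  - apply is_derive_ln, Hs.
  - apply Rle_mult_inv_of_lt; auto.
Qed.

Definition osg_density (m : R -> R) (r : R) : R := 1 / (r * ln r * m r).

Definition osg_integral (m : R -> R) (T : R) : R := RInt (osg_density m) 2 T.

Lemma osg_density_le (m1 m2 : R -> R) (x : R) :
  1 < x -> 0 < m1 x -> m1 x <= m2 x -> osg_density m2 x <= osg_density m1 x.
Proof.
  intros Hx Hm1 Hle. generalize (ln_pos x Hx); intros Hln.
  unfold osg_density, Rdiv; rewrite !Rmult_1_l.
  apply Rinv_le_contravar; [apply Rmult_lt_0_compat; [apply Rmult_lt_0_compat |]; lra |].
  apply Rmult_le_compat_l; [left; apply Rmult_lt_0_compat |]; lra.
Qed.

Section OsgCriteria.

Variable m : R -> R.
Hypothesis m_cont : forall r, 0 < r -> continuous m r.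
Hypothesis m_pos : forall r, 0 < r -> 0 < m r.

Lemma continuous_osg_density r : 1 < r -> continuous (osg_density m) r.
Proof.
  intros Hr. generalize (ln_pos r Hr) (m_pos r ltac:(lra)); intros Hln Hm.
  apply (continuous_mult (fun _ => 1) (fun x => / (x * ln x * m x)));
    [apply continuous_const |].
  apply continuous_Rinv_comp; [| apply Rgt_not_eq, Rmult_lt_0_compat;
    [apply Rmult_lt_0_compat |]; lra].
  apply (continuous_mult (fun x => x * ln x) m); [| apply m_cont; lra].
  apply (ex_derive_continuous (fun x => x * ln x)). auto_derive; lra.
Qed.

Lemma is_derive_osg_integral T : 1 < T -> is_derive (osg_integral m) T (osg_density m T).
Proof.
  intros HT.
  apply (is_derive_RInt (osg_density m) (osg_integral m) 2 T);
    [| apply continuous_osg_density, HT].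
  assert (Hdelta : 0 < T - 1) by lra.
  exists (mkposreal _ Hdelta); intros y Hy.
  apply (@RInt_correct R_CompleteNormedModule), (@ex_RInt_continuous R_CompleteNormedModule).
  intros z Hz; apply continuous_osg_density.
  apply Rabs_lt_between in Hy; simpl in Hy; change (minus y T) with (y - T) in Hy.
  destruct Hz as [Hz _]; unfold Rmin in Hz; destruct (Rle_dec 2 y); lra.
Qed.

Lemma Osg_of_bounded B : 0 < B -> Rbar_locally p_infty (fun x => m x <= B) -> Osg m.
Proof.
  intros HB Hm.
  apply (is_lim_p_infty_of_derive_ge (osg_integral m) (osg_density m)
    (fun x => / B * ln (ln x)) (osg_density (fun _ => B))).
  - generalize (filter_and _ _ Hm (eventually_gt 1)); apply filter_imp.
    intros x [Hmx Hx]; generalize (ln_pos x Hx); intros Hln.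
    split; [| split].
    + apply is_derive_osg_integral, Hx.
    + auto_derive; [lra |]. unfold osg_density; field; lra.
    + apply osg_density_le; auto; apply m_pos; lra.
  - apply is_lim_scal_pos_p_infty; [apply Rinv_0_lt_compat, HB |].
    apply (is_lim_comp ln ln p_infty p_infty p_infty is_lim_ln_p is_lim_ln_p).
    exists 0; intros; discriminate.
Qed.

Lemma not_Osg_of_lower_bound (w W : R -> R) (c : R) :
  0 < c ->
  Rbar_locally p_infty (fun x => 0 < w x /\ c * w x <= m x /\
    is_derive W x (osg_density w x) /\ W x <= 0) ->
  ~ Osg m.
Proof.
  intros Hc Hw.
  apply (not_is_lim_p_infty_of_derive_le (osg_integral m) (osg_density m)
    (fun x => W x * / c) (fun x => osg_density w x * / c) 0).
  generalize (filter_and _ _ Hw (eventually_gt 1)); apply filter_imp.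
  intros x [(Hwx & Hmx & HW & HW0) Hx]; generalize (ln_pos x Hx); intros Hln.
  split; [| split; [| split]].
  - apply is_derive_osg_integral, Hx.
  - apply (is_derive_scal_l W x (osg_density w x) (/ c)), HW.
  - replace (osg_density w x * / c) with (osg_density (fun y => c * w y) x)
      by (unfold osg_density; field; repeat split; lra).
    apply osg_density_le; auto. apply Rmult_lt_0_compat; auto.
  - assert (0 < / c) by (apply Rinv_0_lt_compat, Hc). nra.
Qed.

Lemma not_Osg_of_ln_power_lower_bound (a c : R) :
  0 < a -> 0 < c ->
  Rbar_locally p_infty (fun x => c * exp (a * ln (ln x)) <= m x) -> ~ Osg m.
Proof.
  intros Ha Hc Hm.
  apply (not_Osg_of_lower_bound (fun x => exp (a * ln (ln x)))
    (fun x => - exp (- (a * ln (ln x))) / a) c Hc).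
  generalize (filter_and _ _ Hm (eventually_gt 1)); apply filter_imp.
  intros x [Hmx Hx]; generalize (ln_pos x Hx); intros Hln.
  split; [apply exp_pos | split; [exact Hmx | split]].
  - auto_derive; [lra |].
    unfold osg_density; rewrite exp_Ropp; field.
    repeat split; try lra; apply Rgt_not_eq, exp_pos.
  - generalize (exp_pos (- (a * ln (ln x)))); intros.
    unfold Rdiv; assert (0 < / a) by (apply Rinv_0_lt_compat, Ha). nra.
Qed.

Lemma not_Osg_of_lnln_power_lower_bound (b c : R) :
  1 < b -> 0 < c ->
  Rbar_locally p_infty (fun x => c * exp (b * ln (ln (ln x))) <= m x) -> ~ Osg m.
Proof.
  intros Hb Hc Hm.
  apply (not_Osg_of_lower_bound (fun x => exp (b * ln (ln (ln x))))
    (fun x => - exp ((1 - b) * ln (ln (ln x))) / (b - 1)) c Hc).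
  generalize (filter_and _ _ Hm (eventually_gt (exp 1))); apply filter_imp.
  intros x [Hmx Hx].
  assert (Hln : 1 < ln x)
    by (rewrite <- (ln_exp 1); apply ln_increasing; [apply exp_pos | exact Hx]).
  generalize (ln_pos _ Hln) (exp_pos 1); intros Hlnln He.
  split; [apply exp_pos | split; [exact Hmx | split]].
  - auto_derive; [repeat split; lra |].
    replace ((1 - b) * ln (ln (ln x))) with (ln (ln (ln x)) + - (b * ln (ln (ln x)))) by ring.
    unfold osg_density; rewrite exp_plus, exp_Ropp, exp_ln by exact Hlnln; field.
    repeat split; try lra; apply Rgt_not_eq, exp_pos.
  - generalize (exp_pos ((1 - b) * ln (ln (ln x)))); intros.
    unfold Rdiv; assert (0 < / (b - 1)) by (apply Rinv_0_lt_compat; lra). nra.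
Qed.

End OsgCriteria.

Lemma lim_elasticity_derive_ge_m1 (h g dg : R -> R) (b2 : R) :
  Rbar_locally p_infty (fun s => is_derive h s (g s) /\ 0 < g s /\ is_derive g s (dg s)) ->
  is_lim h p_infty p_infty -> is_lim (elasticity g dg) p_infty b2 -> -1 <= b2.
Proof.
  intros Hreg Hh Hb2. apply Rnot_lt_le; intros Hlt.
  set (d := (-1 - b2) / 2).
  assert (Hd : 0 < d) by (unfold d; lra).
  destruct (power_upper_bound_of_elasticity g dg b2 (- (1 + d))) as (K & HK & Hbound);
    [| exact Hb2 | unfold d; lra |].
  { generalize Hreg; apply filter_imp; intros s (_ & Hgs & Hg); split; auto. }
  apply (not_is_lim_p_infty_of_derive_le h g (fun s => - (K * exp (- (d * ln s))) / d)
    (fun s => K * exp (- (1 + d) * ln s)) 0); [| exact Hh].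
  generalize (filter_and _ _ (filter_and _ _ Hreg Hbound) (eventually_gt 0)).
  apply filter_imp; intros s [[(Hhs & _ & _) Hgs] Hs].
  split; [exact Hhs | split; [| split; [exact Hgs |]]].
  - auto_derive; [lra |].
    replace (- (1 + d) * ln s) with (- (d * ln s) + - ln s) by ring.
    rewrite exp_plus, (exp_Ropp (ln s)), exp_ln by exact Hs.
    field; lra.
  - assert (0 < K * exp (- (d * ln s)) * / d).
    { apply Rmult_lt_0_compat; [apply Rmult_lt_0_compat; [exact HK | apply exp_pos] |].
      apply Rinv_0_lt_compat, Hd. }
    unfold Rdiv; lra.
Qed.

Lemma lim_elasticity_derive_le_m1 (h g dg : R -> R) (b2 : R) :
  Rbar_locally p_infty (fun s =>
    0 < h s /\ is_derive h s (g s) /\ 0 < g s /\ is_derive g s (dg s)) ->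
  is_lim (elasticity h g) p_infty 0 -> is_lim (elasticity g dg) p_infty b2 -> b2 <= -1.
Proof.
  intros Hreg Hb1 Hb2. apply Rnot_lt_le; intros Hlt.
  set (phi := elasticity h g).
  set (dphi := fun s => (g s + s * dg s) / h s - s * g s * g s / (h s * h s)).
  assert (Hphi : Rbar_locally p_infty (fun s => 0 < phi s /\ is_derive phi s (dphi s) /\
    elasticity phi dphi s = 1 + elasticity g dg s - elasticity h g s)).
  { generalize (filter_and _ _ Hreg (eventually_gt 0)); apply filter_imp.
    intros s [(Hhs & Hh & Hgs & Hg) Hs].
    assert (Hphis : 0 < phi s).
    { unfold phi, elasticity. apply Rdiv_lt_0_compat; [apply Rmult_lt_0_compat |]; auto. }
    split; [exact Hphis | split].
    - unfold phi, elasticity, dphi. auto_derive.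
      + split; [exists (dg s); exact Hg | split; [exists (g s); exact Hh | lra]].
      + replace (Derive (fun x : R => g x) s) with (dg s)
          by (symmetry; apply is_derive_unique, Hg).
        replace (Derive (fun x : R => h x) s) with (g s)
          by (symmetry; apply is_derive_unique, Hh).
        field; lra.
    - unfold phi, dphi, elasticity. field. repeat split; lra. }
  assert (Hel : is_lim (elasticity phi dphi) p_infty (1 + b2)).
  { apply (is_lim_ext_loc (fun s => 1 + elasticity g dg s - elasticity h g s)).
    - generalize Hphi; apply filter_imp; intros s (_ & _ & Heq); symmetry; exact Heq.
    - eapply is_lim_minus; [eapply is_lim_plus; [apply is_lim_const | exact Hb2 | reflexivity]
        | exact Hb1 |].
      unfold is_Rbar_minus, is_Rbar_plus; simpl; do 2 f_equal; ring. }
  destruct (power_lower_bound_of_elasticity phi dphi (1 + b2) ((1 + b2) / 2))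
    as (c & Hc & Hgrowth); [| exact Hel | lra |].
  { generalize Hphi; apply filter_imp; intros s (Hpos & Hder & _); split; auto. }
  assert (Hinf : is_lim phi p_infty p_infty).
  { apply (is_lim_le_p_loc (fun s => c * exp ((1 + b2) / 2 * ln s))); [exact Hgrowth |].
    apply is_lim_power_p_infty; lra. }
  unfold phi in Hinf.
  generalize (is_lim_unique _ _ _ Hinf); rewrite (is_lim_unique _ _ _ Hb1); discriminate.
Qed.

Lemma exists_Derive_pos_of_is_lim_p_infty (f : R -> R) :
  (forall r, 0 < r -> ex_derive f r) -> is_lim f p_infty p_infty ->
  exists r0, 0 < r0 /\ 0 < Derive f r0.
Proof.
  intros Hf Hlim. apply NNPP; intros Hnone.
  apply (not_is_lim_p_infty_of_derive_le f (Derive f) (fun _ => 0) (fun _ => 0) 0);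
    [| exact Hlim].
  exists 0; intros x Hx.
  split; [apply Derive_correct, Hf, Hx |].
  split; [exact (is_derive_const 0 x) | split; [| lra]].
  apply Rnot_lt_le; intros Hpos; apply Hnone; exists x; auto.
Qed.

Lemma pos_of_derive_ge_neg_mul (f : R -> R) (K r0 : R) :
  0 < r0 -> (forall x, 0 < x -> ex_derive f x) ->
  (forall x, 0 < x -> - (K / x * f x) <= Derive f x) ->
  0 < f r0 -> forall r, r0 <= r -> 0 < f r.
Proof.
  intros Hr0 Hf Hbound Hpos r Hr.
  assert (Hmono : f r0 * exp (K * ln r0) <= f r * exp (K * ln r)).
  { apply (nondecreasing_of_derive_nonneg (fun x => f x * exp (K * ln x))
      (fun x => (Derive f x + K / x * f x) * exp (K * ln x)) 0); auto.
    - intros x Hx. auto_derive; [split; [apply Hf, Hx | lra] |].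
      change (Derive (fun y : R => f y) x) with (Derive f x). field; lra.
    - intros x Hx. apply Rmult_le_pos; [specialize (Hbound x Hx); lra | left; apply exp_pos]. }
  generalize (Rmult_lt_0_compat _ _ Hpos (exp_pos (K * ln r0))) (exp_pos (K * ln r)).
  intros. nra.
Qed.

Lemma mtilde_ln (m : R -> R) (x : R) : 0 < x -> mtilde m (ln x) = m x.
Proof. intros Hx. unfold mtilde. rewrite exp_ln; auto. Qed.

Lemma eventually_mtilde_ln (m : R -> R) (Q : R -> R -> Prop) :
  Rbar_locally p_infty (fun s => Q s (mtilde m s)) ->
  Rbar_locally p_infty (fun x => Q (ln x) (m x)).
Proof.
  intros HQ.
  assert (HQln : Rbar_locally p_infty (fun x => Q (ln x) (mtilde m (ln x))))
    by exact (is_lim_ln_p _ HQ).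
  generalize (filter_and _ _ HQln (eventually_gt 0)).
  apply filter_imp; intros x [HQx Hx]. rewrite <- (mtilde_ln m x Hx). exact HQx.
Qed.

Lemma is_lim_mtilde (m : R -> R) :
  is_lim m p_infty p_infty -> is_lim (mtilde m) p_infty p_infty.
Proof.
  intros Hm. apply (is_lim_comp m exp p_infty p_infty p_infty Hm is_lim_exp_p).
  exists 0; intros; discriminate.
Qed.

Section GrowthConditions.

Variable m : R -> R.
Hypothesis m_ex_derive : forall r, 0 < r -> ex_derive m r.
Hypothesis m_pos : forall r, 0 < r -> 0 < m r.

Let m_cont r (Hr : 0 < r) : continuous m r := ex_derive_continuous m r (m_ex_derive r Hr).

Lemma is_derive_mtilde s : is_derive (mtilde m) s (Derive m (exp s) * exp s).
Proof.
  rewrite Rmult_comm. apply (is_derive_comp m exp s (Derive m (exp s)) (exp s)).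
  - apply Derive_correct, m_ex_derive, exp_pos.
  - apply is_derive_exp.
Qed.

Lemma Derive_mtilde s : Derive (mtilde m) s = Derive m (exp s) * exp s.
Proof. apply is_derive_unique, is_derive_mtilde. Qed.

Lemma mtilde_pos_is_derive s : 0 < mtilde m s /\ is_derive (mtilde m) s (Derive (mtilde m) s).
Proof. split; [apply m_pos, exp_pos | rewrite Derive_mtilde; apply is_derive_mtilde]. Qed.

Lemma Osg_of_H2c (C : R) : H2c m C -> Osg m.
Proof.
  intros [HC Hlim]. apply (Osg_of_bounded m m_cont m_pos (2 * C)); [lra |].
  generalize (eventually_lt_of_is_lim m C (2 * C) Hlim ltac:(simpl; lra)).
  apply filter_imp; intros; lra.
Qed.

Lemma not_Osg_of_H2b (alpha : R) : H2b m alpha -> ~ Osg m.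
Proof.
  intros [Halpha Hlim].
  destruct (power_lower_bound_of_elasticity m (Derive m) alpha (alpha / 2))
    as (c & Hc & Hgrowth); [| exact Hlim | lra |].
  { exists 0; intros r Hr; split; [apply m_pos, Hr | apply Derive_correct, m_ex_derive, Hr]. }
  apply (not_Osg_of_ln_power_lower_bound m m_cont m_pos (alpha / 2) c); [lra | exact Hc |].
  generalize (filter_and _ _ Hgrowth (eventually_gt 1)); apply filter_imp.
  intros x [Hmx Hx]. eapply Rle_trans; [| exact Hmx].
  apply Rmult_le_compat_l, exp_le_compat, Rmult_le_compat_l; try lra.
  left; apply ln_lt_self, ln_pos, Hx.
Qed.

Lemma not_Osg_of_beta1_pos (b1 : R) :
  0 < b1 -> is_lim (elasticity (mtilde m) (Derive (mtilde m))) p_infty b1 -> ~ Osg m.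
Proof.
  intros Hb1 Hlim.
  destruct (power_lower_bound_of_elasticity (mtilde m) (Derive (mtilde m)) b1 (b1 / 2))
    as (c & Hc & Hgrowth);
    [exists 0; intros s _; apply mtilde_pos_is_derive | exact Hlim | lra |].
  apply (not_Osg_of_ln_power_lower_bound m m_cont m_pos (b1 / 2) c); [lra | exact Hc |].
  exact (eventually_mtilde_ln m (fun s y => c * exp (b1 / 2 * ln s) <= y) Hgrowth).
Qed.

Lemma not_Osg_of_beta_gt1 (beta : Rbar) :
  Rbar_lt 1 beta ->
  is_lim (fun r => r * ln r * Derive (mtilde m) r / mtilde m r) p_infty beta -> ~ Osg m.
Proof.
  intros Hbeta Hlim.
  assert (exists b, 1 < b /\ Rbar_lt b beta) as (b & Hb & Hbbeta).
  { destruct beta as [beta | |]; simpl in Hbeta;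
      [exists ((1 + beta) / 2) | exists 2 | contradiction]; simpl; lra. }
  destruct (lower_bound_of_log_derive_ge (mtilde m) (Derive (mtilde m))
    (fun s => ln (ln s)) (fun s => / (s * ln s)) b) as (c & Hc & Hgrowth).
  { generalize (filter_and _ _ (eventually_gt_of_is_lim _ _ b Hlim Hbbeta) (eventually_gt 1)).
    apply filter_imp; intros s [Hs Hs1]; generalize (ln_pos s Hs1); intros Hln.
    destruct (mtilde_pos_is_derive s) as [Hpos Hder].
    split; [exact Hpos | split; [exact Hder | split]].
    - auto_derive; [repeat split; lra | field; lra].
    - apply Rmult_inv_le_of_lt; [apply Rmult_lt_0_compat; lra | exact Hs]. }
  apply (not_Osg_of_lnln_power_lower_bound m m_cont m_pos b c Hb Hc).
  exact (eventually_mtilde_ln m (fun s y => c * exp (b * ln (ln s)) <= y) Hgrowth).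
Qed.

Hypothesis Dm_ex_derive : forall r, 0 < r -> ex_derive (Derive m) r.
Hypothesis Dm_nonneg : forall r, 0 < r -> 0 <= Derive m r.
Variable C : R.
Hypothesis D2m_bound : forall r, 0 < r -> Rabs (Derive (Derive m) r) <= C / r * Derive m r.
Hypothesis m_lim : is_lim m p_infty p_infty.

Lemma Derive_pos_eventually : Rbar_locally p_infty (fun r => 0 < Derive m r).
Proof.
  destruct (exists_Derive_pos_of_is_lim_p_infty m m_ex_derive m_lim) as (r0 & Hr0 & Hpos).
  exists r0; intros r Hr.
  apply (pos_of_derive_ge_neg_mul (Derive m) (Rabs C) r0); auto; [| lra].
  intros x Hx. generalize (D2m_bound x Hx) (Dm_nonneg x Hx) (Rabs_maj2 (Derive (Derive m) x)).
  intros Hb Hnn Hmaj.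
  assert (C / x * Derive m x <= Rabs C / x * Derive m x).
  { apply Rmult_le_compat_r; [exact Hnn |].
    apply Rmult_le_compat_r; [left; apply Rinv_0_lt_compat, Hx | apply Rle_abs]. }
  lra.
Qed.

Lemma mtilde_second_order_eventually : Rbar_locally p_infty (fun s =>
  0 < mtilde m s /\ is_derive (mtilde m) s (Derive (mtilde m) s) /\
  0 < Derive (mtilde m) s /\ is_derive (Derive (mtilde m)) s (Derive (Derive (mtilde m)) s)).
Proof.
  assert (Hexp : Rbar_locally p_infty (fun s => 0 < Derive m (exp s)))
    by exact (is_lim_exp_p _ Derive_pos_eventually).
  generalize Hexp; apply filter_imp; intros s Hs.
  split; [| split; [| split]]; try apply mtilde_pos_is_derive.
  - rewrite Derive_mtilde. apply Rmult_lt_0_compat; [exact Hs | apply exp_pos].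
  - apply Derive_correct.
    apply (ex_derive_ext (fun t => Derive m (exp t) * exp t));
      [intros t; symmetry; apply Derive_mtilde |].
    auto_derive. apply Dm_ex_derive, exp_pos.
Qed.

Lemma beta2_eq_m1 (b2 : R) :
  is_lim (elasticity (mtilde m) (Derive (mtilde m))) p_infty 0 ->
  is_lim (elasticity (Derive (mtilde m)) (Derive (Derive (mtilde m)))) p_infty b2 ->
  b2 = -1.
Proof.
  intros Hb1 Hb2. apply Rle_antisym.
  - exact (lim_elasticity_derive_le_m1 _ _ _ b2 mtilde_second_order_eventually Hb1 Hb2).
  - apply (lim_elasticity_derive_ge_m1 (mtilde m) (Derive (mtilde m))
      (Derive (Derive (mtilde m))) b2); [| apply is_lim_mtilde, m_lim | exact Hb2].
    generalize mtilde_second_order_eventually; apply filter_imp; intros s (_ & H); exact H.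
Qed.

End GrowthConditions.

Lemma H1_second_order (n : nat) (m : R -> R) :
  H1 n m ->
  (forall r, 0 < r -> ex_derive m r) /\ (forall r, 0 < r -> ex_derive (Derive m) r) /\
  exists C, forall r, 0 < r -> Rabs (Derive (Derive m) r) <= C / r * Derive m r.
Proof.
  intros ([Hk _] & _ & _ & _ & C & HC).
  split; [| split].
  - intros r Hr; exact (Hk 0%nat r ltac:(lia) Hr).
  - intros r Hr; exact (Hk 1%nat r ltac:(lia) Hr).
  - exists C; intros r Hr.
    specialize (HC 1%nat r ltac:(lia) Hr); simpl in HC; rewrite Rmult_1_r in HC.
    exact HC.
Qed.

Theorem lemma2p1 (n : nat) (m : R -> R) :
  (1 <= n)%nat ->
  H1 n m ->
  ((exists beta beta1 beta2, H2a m beta beta1 beta2) \/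
   (exists alpha, H2b m alpha) \/
   (exists C, H2c m C)) ->
  (forall beta beta1 beta2, H2a m beta beta1 beta2 -> Osg m ->
     Rbar_le beta (Finite 1) /\ beta1 = 0 /\ beta2 = -1) /\
  (forall alpha, H2b m alpha -> ~ Osg m) /\
  (forall C, H2c m C -> Osg m).
Proof.
  intros _ HH _.
  destruct (H1_second_order n m HH) as (Hd & Hd2 & C & HC).
  destruct HH as (_ & Hpos & Hnonneg & _).
  split; [| split].
  - intros beta b1 b2 (_ & Hb1 & _ & Hlim & Hbeta & Hlim1 & Hlim2) HO.
    assert (b1 = 0) as ->.
    { destruct Hb1 as [Hb1 | Hb1]; [exfalso | symmetry; exact Hb1].
      exact (not_Osg_of_beta1_pos m Hd Hpos b1 Hb1 Hlim1 HO). }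
    split; [| split; [reflexivity |]].
    + destruct (Rbar_le_lt_dec beta 1) as [Hle | Hgt]; [exact Hle | exfalso].
      exact (not_Osg_of_beta_gt1 m Hd Hpos beta Hgt Hbeta HO).
    + exact (beta2_eq_m1 m Hd Hpos Hd2 Hnonneg C HC Hlim b2 Hlim1 Hlim2).
  - intros alpha Hb. exact (not_Osg_of_H2b m Hd Hpos alpha Hb).
  - intros C' Hc. exact (Osg_of_H2c m Hd Hpos C' Hc).
Qed.
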